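(* Let $X$ be a set and let $\mathcal{L}\subset\mathcal{P}(X)$ be a nest (for every $M,N\in\mathcal{L}$, either $M\subset N$ or $N\subset M$). 1. If for each $L\in\mathcal{L}$ there exists $\sup L$ with respect to $\trianglelefteq_{\mathcal{L}}$, and $\sup L=k$, then $L\supset X-\uparrow{k}$. 2. If for each $L\in\mathcal{L}$ there exists $\sup L$ with respect to $\trianglelefteq_{\mathcal{L}}$ with $\sup L\in X-L$, and $\sup L=k$, then $L\subset X-\uparrow{k}$.
   Context: For a nest $\mathcal{L}$ on $X$, $x\triangleleft_{\mathcal{L}} y$ iff there exists $L\in\mathcal{L}$ with $x\in L$ and $y\notin L$; $\trianglelefteq_{\mathcal{L}}$ is its reflexive version ($x\trianglelefteq_{\mathcal{L}} y$ iff $x\triangleleft_{\mathcal{L}} y$ or $x=y$). For $k\in X$, $\uparrow{k}$ denotes the up-set of $k$, i.e. the set of $y\in X$ with $k\trianglelefteq_{\mathcal{L}} y$ (as used in the paper's proofs and examples). *)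

From mathcomp Require Import all_boot.
From mathcomp Require Import boolp classical_sets.
Set Implicit Arguments. Unset Strict Implicit. Unset Printing Implicit Defensive.
Local Open Scope classical_set_scope.

Definition is_nest (T : Type) (Lf : set (set T)) : Prop :=
  forall M N, Lf M -> Lf N -> M `<=` N \/ N `<=` M.

Definition nest_lt (T : Type) (Lf : set (set T)) (x y : T) : Prop :=
  exists L, Lf L /\ L x /\ ~ L y.

Definition nest_le (T : Type) (Lf : set (set T)) (x y : T) : Prop :=
  nest_lt Lf x y \/ x = y.

Definition nest_upset (T : Type) (Lf : set (set T)) (k : T) : set T :=
  [set y | nest_le Lf k y].

Definition nest_is_sup (T : Type) (Lf : set (set T)) (A : set T) (k : T) : Prop :=
  (forall a, A a -> nest_le Lf a k) /\
  (forall u, (forall a, A a -> nest_le Lf a u) -> nest_le Lf k u).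

From mathcomp Require Import all_boot.
From mathcomp Require Import boolp classical_sets.
Local Open Scope classical_set_scope.

(* Every point outside a member L of the nest lies strictly above all of L, so
   it bounds L from above and therefore lies above sup L; this gives part 1.
   Conversely, comparability of the members makes each member of the nest a
   down-set for the order, so the up-set of a point outside L misses L; this
   gives part 2. *)

Lemma nest_le_notin (T : Type) (Lf : set (set T)) (L : set T) (a x : T) :
  Lf L -> L a -> ~ L x -> nest_le Lf a x.
Proof. by move=> LfL La Lx; left; exists L. Qed.

Lemma nest_sup_le_notin (T : Type) (Lf : set (set T)) (L : set T) (k x : T) :
  Lf L -> nest_is_sup Lf L k -> ~ L x -> nest_le Lf k x.
Proof.
by move=> LfL [_ lub] Lx; apply: lub => a La; exact: nest_le_notin LfL La Lx.
Qed.

Lemma nest_member_le_closed (T : Type) (Lf : set (set T)) (L : set T)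
    (k x : T) :
  is_nest Lf -> Lf L -> nest_le Lf k x -> L x -> L k.
Proof.
move=> nest LfL [[M [LfM [Mk Mx]]] | <-] Lx //.
by case: (nest M L LfM LfL) => [ML | LM]; [exact: ML | case: Mx; exact: LM].
Qed.

Theorem lemma3p1 (T : Type) (Lf : set (set T)) (Hnest : is_nest Lf) :
  (forall (L : set T) (k : T), Lf L -> nest_is_sup Lf L k ->
      ~` nest_upset Lf k `<=` L) /\
  (forall (L : set T) (k : T), Lf L -> nest_is_sup Lf L k -> ~ L k ->
      L `<=` ~` nest_upset Lf k).
Proof.
split=> [L k LfL supk x kx | L k LfL _ Lk x Lx kx].
- by apply: contrapT => Lx; apply: kx; exact: nest_sup_le_notin supk Lx.
- by apply: Lk; exact: nest_member_le_closed Hnest LfL kx Lx.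
Qed.
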